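(* Let $s,q,r\in\mathbb N$ and $c\in\mathbb R^s$. (a) If $K\in\mathbb R^{s\times s}$ is diagonal, then $V_q^{\mathsf T}KV_r$ has Hankel form. (b) If $X\in\mathbb R^{q\times r}$ has Hankel form, then $\mathcal P_q^{\mathsf T}X\mathcal P_r$ and $\mathcal L_{q,r}(X)$ have Hankel form. (c) For all $X\in\mathbb R^{q\times r}$: $\mathcal P_q^{\mathsf T}\mathcal L_{q,r}(X)=\mathcal L_{q,r}(\mathcal P_q^{\mathsf T}X)$ and $\mathcal L_{q,r}(X)\mathcal P_r=\mathcal L_{q,r}(X\mathcal P_r)$.
   Context: $V_k:=(\mathbb 1,c,c^2,\dots,c^{k-1})\in\mathbb R^{s\times k}$ (componentwise powers of the node vector $c$), $\mathcal P_k:=\big(\binom{j-1}{i-1}\big)_{i,j=1}^k$, $\tilde E_k:=(i\,\delta_{i+1,j})_{i,j=1}^k$, and $\mathcal L_{q,r}(X):=\tilde E_q^{\mathsf T}X+X\tilde E_r$ for $X\in\mathbb R^{q\times r}$. A matrix $X=(x_{ij})\in\mathbb R^{q\times r}$ has Hankel form if there are numbers $\xi_k$ with $x_{ij}=\xi_{i+j-1}$ for all $1\le i\le q$, $1\le j\le r$. *)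

(* Matrices are indexed from 0 ('I_k); the paper's 1-based
   indices i,j correspond to i-1, j-1 here. *)
From mathcomp Require Import all_boot all_order all_algebra.
From mathcomp Require Import reals.
Set Implicit Arguments. Unset Strict Implicit. Unset Printing Implicit Defensive.
Import Order.TTheory GRing.Theory Num.Theory.
Local Open Scope ring_scope.

Definition Vmx {R : realType} (s k : nat) (c : 'cV[R]_s) : 'M[R]_(s, k) :=
  \matrix_(i < s, j < k) (c i 0) ^+ j.

Definition Pmx {R : realType} (k : nat) : 'M[R]_k :=
  \matrix_(i < k, j < k) ('C(j, i))%:R.

Definition Etmx {R : realType} (k : nat) : 'M[R]_k :=
  \matrix_(i < k, j < k) (if (j : nat) == i.+1 then (i.+1)%:R else 0).

Definition Lop {R : realType} (q r : nat) (X : 'M[R]_(q, r)) : 'M[R]_(q, r) :=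
  (Etmx q)^T *m X + X *m Etmx r.

(* Hankel form: x_ij = xi_{i+j-1} (1-based) i.e. x_ij = xi (i+j) (0-based) *)
Definition hankel {R : realType} (q r : nat) (X : 'M[R]_(q, r)) : Prop :=
  exists xi : nat -> R, forall (i : 'I_q) (j : 'I_r), X i j = xi (i + j)%N.

(** With 0-based indices: (a) the (i,j) entry of V_q^T K V_r is Σ_k K_kk c_k^(i+j).
    (b) Ẽ^T X and X Ẽ have entries i x_(i-1,j) and j x_(i,j-1), so for
    Hankel X the entry of L(X) is (i+j) ξ_(i+j-1); the entry of P^T X P is
    Σ_(a,b) C(i,a) C(j,b) ξ_(a+b) = Σ_n C(i+j,n) ξ_n by the Vandermonde
    convolution, proved by induction on i through Pascal's rule.
    (c) Ẽ P = P Ẽ, which is the absorption identity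
    (i+1) C(j,i+1) = j C(j-1,i). *)
From mathcomp Require Import all_boot all_order all_algebra.
From mathcomp Require Import reals.
Set Implicit Arguments. Unset Strict Implicit. Unset Printing Implicit Defensive.
Import Order.TTheory GRing.Theory Num.Theory.
Local Open Scope ring_scope.

Section BinomialTransform.
Variable R : pzSemiRingType.

Definition binomial_transform (x : nat -> R) m :=
  \sum_(n < m.+1) 'C(m, n)%:R * x n.

Lemma binomial_transformS x m :
  binomial_transform x m.+1 =
  binomial_transform x m + binomial_transform (fun n => x n.+1) m.
Proof.
rewrite /binomial_transform big_ord_recl bin0 mul1r.
under eq_bigr => n _ do rewrite /bump /= binS natrD mulrDl.
rewrite big_split addrA; congr (_ + _).
rewrite [RHS]big_ord_recl bin0 mul1r; congr (_ + _).
by rewrite big_ord_recr /= bin_small // mul0r addr0.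
Qed.

Lemma binomial_transform_add x i j :
  binomial_transform (fun a => binomial_transform (fun b => x (a + b)%N) j) i =
  binomial_transform x (i + j).
Proof.
elim: i x => [|i IHi] x; first by rewrite /binomial_transform big_ord1 bin0 mul1r.
by rewrite binomial_transformS IHi addSn binomial_transformS -(IHi (fun n => x n.+1)).
Qed.

Lemma sum_binomial_ord_narrow k m (F : nat -> R) : (m < k)%N ->
  \sum_(a < k) 'C(m, a)%:R * F a = \sum_(a < m.+1) 'C(m, a)%:R * F a.
Proof.
move=> ltmk; rewrite (big_ord_widen _ (fun a => 'C(m, a)%:R * F a) ltmk) [RHS]big_mkcond.
by apply: eq_bigr => a _; case: ltnP => // ltma; rewrite bin_small ?mul0r.
Qed.

End BinomialTransform.

Section Matrices.
Variable R : realType.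

Lemma hankel_Vmx_diag s q r (c : 'cV[R]_s) (K : 'M[R]_s) :
  is_diag_mx K -> hankel ((Vmx q c)^T *m K *m Vmx r c).
Proof.
move=> /is_diag_mxP Kdiag.
exists (fun n => \sum_(k < s) K k k * c k 0 ^+ n) => i j.
rewrite mxE; apply: eq_bigr => k _.
rewrite mxE (bigD1 k) //= big1 ?addr0 => [|l nlk]; last by rewrite Kdiag ?mulr0.
by rewrite !mxE exprD mulrA [_ ^+ i * _]mulrC.
Qed.

Lemma mulmx_Etmx_mxE q r (X : 'M[R]_(q, r)) (f : nat -> nat -> R) :
  (forall i j, X i j = f i j) -> forall i j, (X *m Etmx r) i j = j%:R * f i j.-1.
Proof.
move=> Xf i [[|j] ltjr]; rewrite mxE.
  by rewrite mul0r big1 // => l _; rewrite mxE mulr0.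
transitivity (\sum_(l < r | l == j :> nat) f i l * l.+1%:R).
  rewrite [RHS]big_mkcond; apply: eq_bigr => l _.
  by rewrite mxE eqSS eq_sym Xf; case: eqP; rewrite ?mulr0.
by rewrite (big_ord1_eq _ (fun l => f i l * l.+1%:R)) (ltnW ltjr) mulrC.
Qed.

Lemma Etmx_mulmx_mxE q r (X : 'M[R]_(q, r)) (f : nat -> nat -> R) :
  (forall i j, X i j = f i j) ->
  forall i j, (Etmx q *m X) i j = if (i.+1 < q)%N then i.+1%:R * f i.+1 j else 0.
Proof.
move=> Xf i j; rewrite mxE.
transitivity (\sum_(l < q | l == i.+1 :> nat) i.+1%:R * f l j).
  rewrite [RHS]big_mkcond; apply: eq_bigr => l _.
  by rewrite mxE Xf; case: eqP => [->|]; rewrite ?mul0r.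
by rewrite (big_ord1_eq _ (fun l => i.+1%:R * f l j)).
Qed.

Lemma trEtmx_mulmx_mxE q r (X : 'M[R]_(q, r)) (f : nat -> nat -> R) :
  (forall i j, X i j = f i j) -> forall i j, ((Etmx q)^T *m X) i j = i%:R * f i.-1 j.
Proof.
move=> Xf i j; rewrite -[X]trmxK -trmx_mul mxE.
by rewrite (@mulmx_Etmx_mxE _ _ _ (fun a b => f b a)) // => a b; rewrite mxE.
Qed.

Lemma Etmx_Pmx_comm k : Etmx k *m Pmx k = Pmx k *m Etmx k :> 'M[R]_k.
Proof.
apply/matrixP => i j.
rewrite (@Etmx_mulmx_mxE _ _ _ (fun a b => 'C(b, a)%:R)) => [|a b]; last by rewrite mxE.
rewrite (@mulmx_Etmx_mxE _ _ _ (fun a b => 'C(b, a)%:R)) => [|a b]; last by rewrite mxE.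
rewrite -!natrM mul_bin_diag; case: ltnP => // le_k_i1.
by rewrite bin_small ?muln0 //; apply: leq_trans (ltn_ord j) le_k_i1.
Qed.

Lemma trPmx_mulmx_Lop q r (X : 'M[R]_(q, r)) :
  (Pmx q)^T *m Lop X = Lop ((Pmx q)^T *m X).
Proof. by rewrite /Lop mulmxDr !mulmxA -trmx_mul Etmx_Pmx_comm trmx_mul. Qed.

Lemma Lop_mulmx_Pmx q r (X : 'M[R]_(q, r)) : Lop X *m Pmx r = Lop (X *m Pmx r).
Proof. by rewrite /Lop mulmxDl -!mulmxA Etmx_Pmx_comm. Qed.

Lemma hankel_Lop q r (X : 'M[R]_(q, r)) : hankel X -> hankel (Lop X).
Proof.
case=> x Xx; exists (fun n => n%:R * x n.-1) => i j.
rewrite /Lop mxE (@trEtmx_mulmx_mxE _ _ _ (fun a b => x (a + b)%N)) //.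
rewrite (@mulmx_Etmx_mxE _ _ _ (fun a b => x (a + b)%N)) //.
case: i j => [[|i] _] [[|j] _] /=; rewrite ?mul0r ?add0r ?addr0 ?addn0 //.
by rewrite addnS addSn /= natrD mulrDl.
Qed.

Lemma hankel_trPmx_mulmx_Pmx q r (X : 'M[R]_(q, r)) :
  hankel X -> hankel ((Pmx q)^T *m X *m Pmx r).
Proof.
case=> x Xx; exists (binomial_transform x) => i j.
rewrite -binomial_transform_add /binomial_transform.
rewrite -(sum_binomial_ord_narrow
           (fun a => binomial_transform (fun b => x (a + b)%N) j) (ltn_ord i)).
under eq_bigr => a _ do rewrite /binomial_transform
  -(sum_binomial_ord_narrow (fun b => x (a + b)%N) (ltn_ord j)) mulr_sumr.
rewrite mxE exchange_big /=; apply: eq_bigr => b _.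
rewrite mxE mulr_suml; apply: eq_bigr => a _.
by rewrite !mxE Xx -mulrA [x _ * _]mulrC.
Qed.

End Matrices.

Theorem lemma4p3 (R : realType) (s q r : nat) (c : 'cV[R]_s) :
  (forall K : 'M[R]_s, is_diag_mx K ->
     hankel ((Vmx q c)^T *m K *m Vmx r c))
  /\ (forall X : 'M[R]_(q, r), hankel X ->
        hankel ((Pmx q)^T *m X *m Pmx r) /\ hankel (Lop X))
  /\ (forall X : 'M[R]_(q, r),
        (Pmx q)^T *m Lop X = Lop ((Pmx q)^T *m X)
        /\ Lop X *m Pmx r = Lop (X *m Pmx r)).
Proof.
split; first exact: hankel_Vmx_diag.
split=> X; first by move=> hX; split; [exact: hankel_trPmx_mulmx_Pmx | exact: hankel_Lop].
by split; [exact: trPmx_mulmx_Lop | exact: Lop_mulmx_Pmx].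
Qed.
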